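(* Let $n\ge3$ and $k$ be an integer with $1\le k<\lfloor n/2\rfloor$. Then there is a bijection between $\mathcal D_{k,n}$ and the set $\mathcal A_{k+1}$ of non-interval permutations of length $k+1$; in particular $|\mathcal D_{k,n}|=|\mathcal A_{k+1}|$. (Explicitly, with $\mathcal B_{k+1}=\{\tilde b: b\in\mathcal A_{k+1}\}$, the map $u\mapsto{\rm red}(u\,a)$ with $a=\min([n]\setminus{\rm alph}(u))$ is a bijection $\mathcal D_{k,n}\to\mathcal B_{k+1}$.)
   Context: $[m,n]=\{m,\ldots,n\}$, $[n]=[1,n]$; ${\rm alph}(w)$ is the set of letters of $w$; $\tilde w$ is the reversal of a word $w$. For a word $\tau$ of distinct positive integers, ${\rm red}(\tau)$ replaces the smallest letter by $1$, the second smallest by $2$, etc. A finite set $A\subset\mathbb P$ with $|A|\ge2$ is periodic if the differences between consecutive elements (in increasing order) are all equal. For $n\ge3$, $k\in[n-2]$, $\mathcal D_{k,n}$ is the set of words $u=u_1\cdots u_k$ of $k$ distinct letters of $[n]$ such that $[n]\setminus\{u_1,\ldots,u_k\}$ is periodic and for every $j<k$ the set $[n]\setminus\{u_1,\ldots,u_j\}$ is not periodic. A permutation $s=s_1\cdots s_N$ of $[N]$, $N\ge2$, is non-interval if for every $l$ with $2\le l<N$ the set $\{s_1,\ldots,s_l\}$ is not of the form $[c,c+l-1]$ for any integer $c$. *)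

From mathcomp Require Import all_boot all_order all_algebra.
Import Order.TTheory GRing.Theory Num.Theory.
Set Implicit Arguments.
Unset Strict Implicit.
Unset Printing Implicit Defensive.

Definition compl (n : nat) (u : seq nat) : seq nat :=
  [seq x <- iota 1 n | x \notin u].

(* A finite set of positive integers, given by its increasing enumeration s,
   is periodic: |s| >= 2 and all consecutive differences are equal. *)
Definition periodic (s : seq nat) : Prop :=
  2 <= size s /\
  forall i, i.+1 < size s ->
    nth 0 s i.+1 - nth 0 s i = nth 0 s 1 - nth 0 s 0.

Definition inD (k n : nat) (u : seq nat) : Prop :=
  size u = k /\ uniq u /\ all (fun x => 1 <= x <= n) u /\
  periodic (compl n u) /\
  (forall j, 1 <= j -> j < k -> ~ periodic (compl n (take j u))).

Definition red (t : seq nat) : seq nat :=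
  [seq count (fun y => y <= x) t | x <- t].

Definition inA (N : nat) (s : seq nat) : Prop :=
  2 <= N /\ perm_eq s (iota 1 N) /\
  forall l, 2 <= l -> l < N ->
    ~ (exists c : int, forall x : nat, (x \in take l s) <-> (c <= (x%:Z) <= c + (l%:Z) - 1)%R).

Definition inB (N : nat) (b : seq nat) : Prop :=
  exists a, inA N a /\ b = rev a.

(* a = min([n] \ alph(u)) (compl is increasing), and the map u |-> red(u a). *)
Definition phi (n : nat) (u : seq nat) : seq nat :=
  red (rcons u (head 0 (compl n u))).

From mathcomp Require Import all_boot ssralg ssrnum ssrint zify.

Set Implicit Arguments.
Unset Strict Implicit.
Unset Printing Implicit Defensive.

(* When 2k + 2 <= n, the complement of a k-letter word u in [n] has at least
   k + 2 elements, too many for a periodic subset of [n] of step >= 2; so for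
   u in D_{k,n} the complement is an interval [c, c + e], e = n - k - 1, whose
   minimum c is the letter appended by phi.  Closing the gap (c, c + e]
   ([squeeze c e]) turns u c into a permutation of [k + 1], which is therefore
   red (u c); reopening it ([stretch c e]) inverts this.  As the gap sits right
   above c, and c lies in every suffix of u c, the complement of the length-j
   prefix of u is an interval iff the suffix of red (u c) after position j is
   one.  So the minimality condition defining D_{k,n} is exactly the
   non-interval condition on the reversal of red (u c). *)

Definition stretch (c e y : nat) : nat := if y <= c then y else y + e.
Definition squeeze (c e x : nat) : nat := if x <= c then x else x - e.

Section Stretch.

Variables c e : nat.

Lemma leq_stretch : {mono stretch c e : x y / x <= y}.
Proof. by move=> x y; rewrite /stretch; case: (leqP x c); case: (leqP y c); lia. Qed.

Lemma stretch_inj : injective (stretch c e).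
Proof. exact: incn_inj leq_stretch. Qed.

Lemma stretchK : cancel (stretch c e) (squeeze c e).
Proof.
move=> y; rewrite /stretch /squeeze; case: (leqP y c) => hy; first by rewrite hy.
by rewrite (_ : y + e <= c = false) ?addnK //; lia.
Qed.

Lemma squeezeK x : ~~ (c < x <= c + e) -> stretch c e (squeeze c e x) = x.
Proof.
rewrite /stretch /squeeze; case: (leqP x c) => hx; first by rewrite hx.
by move=> hgap; rewrite (_ : x - e <= c = false); lia.
Qed.

Lemma mem_stretch (X : seq nat) y : ~~ (c < y <= c + e) ->
  (y \in map (stretch c e) X) = (squeeze c e y \in X).
Proof. by move=> hy; rewrite -{1}(squeezeK hy) (mem_map stretch_inj). Qed.

Lemma map_stretch_rcons (s : seq nat) :
  map (stretch c e) (rcons s c) = rcons (map (stretch c e) s) c.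
Proof. by rewrite map_rcons /stretch leqnn. Qed.

End Stretch.

Lemma red_mono (h : nat -> nat) (t : seq nat) :
  {mono h : x y / x <= y} -> red (map h t) = red t.
Proof.
move=> h_mono; rewrite /red -map_comp; apply: eq_map => x /=.
by rewrite count_map; apply: eq_count => y /=; rewrite h_mono.
Qed.

Lemma count_leq_iota N x : x <= N -> count (fun y => y <= x) (iota 1 N) = x.
Proof.
move=> hx; rewrite -(subnKC hx) iotaD count_cat.
rewrite (@eq_in_count _ _ predT) ?count_predT ?size_iota; last first.
  by move=> y; rewrite mem_iota /=; lia.
rewrite (@eq_in_count _ _ pred0) ?count_pred0 ?addn0 // => y.
by rewrite mem_iota /=; lia.
Qed.

Lemma red_perm_iota N (t : seq nat) : perm_eq t (iota 1 N) -> red t = t.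
Proof.
move=> t_perm; apply: map_id_in => x xt.
have := xt; rewrite (permP t_perm) (perm_mem t_perm) mem_iota => hx.
by rewrite count_leq_iota //; lia.
Qed.

Definition is_interval (s : seq nat) : Prop := exists a, s =i iota a (size s).

Lemma mem_compl n (v : seq nat) x : (x \in compl n v) = (0 < x <= n) && (x \notin v).
Proof. by rewrite mem_filter mem_iota andbC; congr (_ && _); lia. Qed.

Lemma compl_sorted n (v : seq nat) : sorted ltn (compl n v).
Proof. exact/(sorted_filter ltn_trans)/iota_ltn_sorted. Qed.

Lemma size_compl n (v : seq nat) : uniq v -> all (fun x => 0 < x <= n) v ->
  size (compl n v) = n - size v.
Proof.
move=> v_uniq v_range.
have v_perm : perm_eq [seq x <- iota 1 n | x \in v] v.
  apply: uniq_perm => [||x]; [exact/filter_uniq/iota_uniq | exact: v_uniq |].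
  rewrite mem_filter mem_iota; case xv: (x \in v) => //=.
  by have := allP v_range x xv; lia.
rewrite /compl size_filter (eq_count (a2 := predC (mem v))) //.
have := count_predC (mem v) (iota 1 n).
rewrite size_iota -size_filter (perm_size v_perm).
by move/(congr1 (subn^~ (size v))); rewrite addKn.
Qed.

Lemma interval_complE n (v : seq nat) :
  is_interval (compl n v) <-> exists a, compl n v = iota a (size (compl n v)).
Proof.
split=> [] [a ha]; exists a; last by move=> x; rewrite {1}ha.
exact: (irr_sorted_eq ltn_trans ltnn (compl_sorted n v) (iota_ltn_sorted _ _)).
Qed.

Lemma periodic_iota a m : 2 <= m -> periodic (iota a m).
Proof.
move=> hm; split=> [|i]; rewrite size_iota // => hi.
by rewrite !nth_iota //; lia.
Qed.

Lemma periodic_sorted_iota (s : seq nat) : sorted ltn s -> periodic s ->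
  last 0 s < head 0 s + 2 * (size s).-1 -> s = iota (head 0 s) (size s).
Proof.
move=> s_sorted [s_size s_step]; rewrite -nth_last -nth0 => s_span.
set d := nth 0 s 1 - nth 0 s 0.
have s_lt i : i.+1 < size s -> nth 0 s i < nth 0 s i.+1.
  by move=> hi; apply: (sorted_ltn_nth ltn_trans) => //; rewrite inE; lia.
have s_nth i : i < size s -> nth 0 s i = nth 0 s 0 + i * d.
  elim: i => [|i IH] hi; first by rewrite addn0.
  by have := s_step i hi; have := s_lt i hi; have := IH (ltnW hi); rewrite mulSn; lia.
have d1 : d = 1.
  have := s_lt 0 s_size; rewrite -/d => d_pos.
  have last_s := s_nth (size s).-1 (ltac:(lia)).
  nia.
apply: (@eq_from_nth _ 0) => [|i hi]; first by rewrite size_iota.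
by rewrite nth_iota // s_nth // d1 muln1.
Qed.

Lemma periodic_complE n (v : seq nat) : uniq v -> all (fun x => 0 < x <= n) v ->
  2 * size v + 2 <= n -> periodic (compl n v) <-> is_interval (compl n v).
Proof.
move=> v_uniq v_range v_small; rewrite interval_complE.
have compl_size := size_compl v_uniq v_range.
split=> [compl_periodic | [a ->]]; last first.
  by apply: periodic_iota; rewrite compl_size; lia.
exists (head 0 (compl n v)).
apply: (periodic_sorted_iota (compl_sorted n v) compl_periodic).
have compl_range x : x \in compl n v -> 0 < x <= n by rewrite mem_compl => /andP[].
move: compl_size compl_range; case: (compl n v) => [|x s] /= s_size s_range.
  lia.
by have := s_range x (mem_head x s); have := s_range (last x s) (mem_last x s); lia.
Qed.

Lemma interval_stretch c e (X : seq nat) a l : c \in X ->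
  X =i iota a l <->
  [pred y | (y \in map (stretch c e) X) || (c < y <= c + e)] =i iota a (l + e).
Proof.
move=> cX; split=> [X_int y | Y_int x].
  have := cX; rewrite X_int mem_iota => c_int.
  rewrite inE mem_iota; case: (boolP (c < y <= c + e)) => gap; first by lia.
  by rewrite orbF mem_stretch // X_int mem_iota /squeeze; case: (leqP y c); lia.
have c_int : a <= c < a + l.
  have cY : c \in map (stretch c e) X by apply/mapP; exists c; rewrite /stretch ?leqnn.
  have ceY : (c + e) \in [pred y | (y \in map (stretch c e) X) || (c < y <= c + e)].
    rewrite inE; case: (posnP e) => [e0|e_pos]; last by apply/orP; right; lia.
    by rewrite {1}e0 addn0 cY.
  have /andP[ac _] : a <= c < a + (l + e) by rewrite -mem_iota -Y_int inE cY.
  have /andP[_ ce] : a <= c + e < a + (l + e) by rewrite -mem_iota -Y_int.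
  lia.
have := Y_int (stretch c e x); rewrite inE (mem_map (@stretch_inj c e)) !mem_iota.
rewrite /stretch; case: (leqP x c) => hx.
  by rewrite ltnNge hx orbF => ->; lia.
by rewrite leq_add2r (leqNgt x c) hx andbF orbF => ->; lia.
Qed.

Lemma mem_perm_iota N (t : seq nat) x : perm_eq t (iota 1 N) -> (x \in t) = (0 < x <= N).
Proof. by move=> t_perm; rewrite (perm_mem t_perm) mem_iota; lia. Qed.

Lemma perm_iota_range N (s : seq nat) : uniq s -> size s = N ->
  all (fun x => 0 < x <= N) s -> perm_eq s (iota 1 N).
Proof.
move=> s_uniq s_size s_range; apply: uniq_perm; rewrite ?iota_uniq //.
have s_sub : {subset s <= iota 1 N}.
  by move=> x xs; rewrite mem_iota; have := allP s_range x xs; lia.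
by have [] := uniq_min_size s_uniq s_sub; rewrite // size_iota s_size.
Qed.

Lemma mem_drop_uniq (T : eqType) (s : seq T) j x : uniq s ->
  (x \in drop j s) = (x \in s) && (x \notin take j s).
Proof.
rewrite -{1 3}(cat_take_drop j s) cat_uniq mem_cat => /and3P[_ /hasPn disj _].
case: (boolP (x \in drop j s)) => [xd | _]; last by rewrite orbF andbN.
by rewrite orbT (disj x xd).
Qed.

Section GapInsertion.

Variables (N n c : nat) (t : seq nat).
Hypotheses (N_le_n : N <= n) (t_perm : perm_eq t (iota 1 N)) (c_in_t : c \in t).

Local Notation e := (n - N).
Local Notation w := (map (stretch c e) t).

Let t_uniq : uniq t. Proof. by rewrite (perm_uniq t_perm) iota_uniq. Qed.

Lemma stretch_perm_uniq : uniq w.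
Proof. by rewrite (map_inj_uniq (@stretch_inj c e)). Qed.

Lemma stretch_perm_range : all (fun y => 0 < y <= n) w.
Proof.
apply/allP=> _ /mapP[x xt ->]; move: xt; rewrite (mem_perm_iota _ t_perm) /stretch.
by case: (leqP x c); lia.
Qed.

Lemma mem_compl_take_stretch j y :
  (y \in compl n (take j w)) =
  (y \in map (stretch c e) (drop j t)) || (c < y <= c + e).
Proof.
have c_le : 0 < c <= N by rewrite -(mem_perm_iota _ t_perm).
rewrite mem_compl; case: (boolP (c < y <= c + e)) => gap.
  rewrite orbT; apply/andP; split; first lia.
  apply/negP => /mem_take/mapP[x _ yx].
  by move: gap; rewrite yx /stretch; case: (leqP x c); lia.
rewrite orbF -map_take !mem_stretch // mem_drop_uniq // (mem_perm_iota _ t_perm).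
by congr (_ && _); move: gap; rewrite /squeeze; case: (leqP y c); lia.
Qed.

Lemma interval_compl_take_stretch j : c \in drop j t ->
  is_interval (compl n (take j w)) <-> is_interval (drop j t).
Proof.
move=> c_drop; have j_lt : j < N.
  have : 0 < size (drop j t) by case: (drop j t) c_drop.
  by rewrite size_drop (perm_size t_perm) size_iota subn_gt0.
have size_compl_take : size (compl n (take j w)) = N - j + e.
  rewrite size_compl ?take_uniq ?stretch_perm_uniq //; last first.
    by apply/allP=> y /mem_take; apply: (allP stretch_perm_range).
  rewrite size_takel; first lia.
  by rewrite size_map (perm_size t_perm) size_iota ltnW.
rewrite /is_interval size_compl_take size_drop (perm_size t_perm) size_iota.
split=> [] [a a_int]; exists a.
  apply/(interval_stretch e a (N - j) c_drop) => y.
  by rewrite inE -mem_compl_take_stretch.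
move=> y; rewrite mem_compl_take_stretch.
exact: (interval_stretch e a (N - j) c_drop).1 a_int y.
Qed.

End GapInsertion.

Lemma interval_rev (s : seq nat) : is_interval (rev s) <-> is_interval s.
Proof.
by rewrite /is_interval size_rev; split=> [] [a ha]; exists a => x; rewrite -ha mem_rev.
Qed.

Lemma interval_int_window (s : seq nat) : s != [::] -> 0 \notin s ->
  is_interval s <->
  exists c : int, forall x : nat, (x \in s) <-> (c <= x%:Z <= c + (size s)%:Z - 1)%R.
Proof.
move=> s_nil s0; split=> [[a s_int] | [c s_win]].
  by exists (Posz a) => x; rewrite s_int mem_iota; lia.
have [x0 x0s] : exists x0 : nat, x0 \in s.
  by case: s s_nil {s0 s_win} => // x0 s _; exists x0; rewrite mem_head.
have c_pos : (0 < c)%R.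
  have := (s_win x0).1 x0s; have := fun h => negP s0 ((s_win 0).2 h); lia.
case: c c_pos s_win => // a _ s_win; exists a => x.
by rewrite mem_iota; apply/idP/idP => [/s_win | x_int]; [|apply/s_win]; lia.
Qed.

Lemma inA_revE N (t : seq nat) : 2 <= N -> perm_eq t (iota 1 N) ->
  inA N (rev t) <-> forall j, 0 < j < N.-1 -> ~ is_interval (drop j t).
Proof.
move=> N_ge2 t_perm; have t_size : size t = N by rewrite (perm_size t_perm) size_iota.
have window_suffix l : 0 < l <= N ->
    (exists c : int, forall x : nat,
       (x \in take l (rev t)) <-> (c <= x%:Z <= c + l%:Z - 1)%R) <->
    is_interval (drop (N - l) t).
  move=> l_range; have take_size : size (take l (rev t)) = l.
    by rewrite size_takel ?size_rev ?t_size; lia.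
  rewrite -{2}take_size -interval_int_window; last first.
  - by apply/negP => /mem_take; rewrite mem_rev (mem_perm_iota _ t_perm).
  - by rewrite -size_eq0 take_size; lia.
  by rewrite take_rev t_size interval_rev.
split=> [[_ [_ no_window]] j j_range j_int | no_interval].
  have l_range : 0 < N - j <= N by lia.
  apply: (no_window (N - j)); [lia | lia | apply/(window_suffix _ l_range)].
  by rewrite subKn //; lia.
split=> //; split=> [|l l_ge2 l_lt l_win]; first by rewrite perm_rev.
have l_range : 0 < l <= N by lia.
by apply: (no_interval (N - l)); [lia | apply/(window_suffix l l_range)].
Qed.

Section StretchedWords.

Variables n k : nat.
Hypothesis k_small : 2 * k + 2 <= n.

Local Notation e := (n - k.+1).

Let k_lt_n : k.+1 <= n. Proof. lia. Qed.

Lemma inD_stretchE t' c : perm_eq (rcons t' c) (iota 1 k.+1) ->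
  inD k n (map (stretch c e) t') <->
  forall j, 0 < j < k -> ~ is_interval (drop j (rcons t' c)).
Proof.
move=> t_perm; set t := rcons t' c; set w := map (stretch c e) t.
have t'_size : size t' = k by have := perm_size t_perm; rewrite size_rcons size_iota => -[].
have c_t : c \in t by rewrite mem_rcons mem_head.
have w_uniq := stretch_perm_uniq n c t_perm.
have w_range := stretch_perm_range k_lt_n t_perm c_t.
have u_w : map (stretch c e) t' = take k w.
  by rewrite /w /t map_stretch_rcons -cats1 take_size_cat // size_map t'_size.
have periodic_prefix j : j <= k ->
    periodic (compl n (take j w)) <-> is_interval (drop j t).
  move=> j_le; have c_drop : c \in drop j t.
    by rewrite /t drop_rcons ?t'_size // mem_rcons mem_head.
  rewrite -(interval_compl_take_stretch k_lt_n t_perm c_t c_drop).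
  apply: periodic_complE; first exact: take_uniq.
    by apply/allP=> y /mem_take; apply: (allP w_range).
  by rewrite size_takel ?size_map ?(perm_size t_perm) ?size_iota; lia.
rewrite u_w; split=> [[_ [_ [_ [_ no_periodic]]]] j j_range j_int | no_interval].
  apply: (no_periodic j); [lia | lia | rewrite take_takel; last lia].
  by apply/(periodic_prefix j); first lia.
split; first by rewrite size_takel ?size_map ?(perm_size t_perm) ?size_iota.
split; first exact: take_uniq.
split; first by apply/allP=> y /mem_take; apply: (allP w_range).
split.
  apply/(periodic_prefix k) => //; exists c.
  by rewrite /t drop_rcons ?drop_oversize ?t'_size.
move=> j j_ge1 j_lt; rewrite take_takel; last lia.
by move/(periodic_prefix j (ltnW j_lt)); apply: (no_interval j); lia.
Qed.

Lemma phi_stretch t' c : perm_eq (rcons t' c) (iota 1 k.+1) ->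
  phi n (map (stretch c e) t') = rcons t' c.
Proof.
move=> t_perm; set u := map (stretch c e) t'.
have t'_size : size t' = k by have := perm_size t_perm; rewrite size_rcons size_iota => -[].
have c_t : c \in rcons t' c by rewrite mem_rcons mem_head.
have u_w : u = take k (map (stretch c e) (rcons t' c)).
  by rewrite map_stretch_rcons -cats1 take_size_cat // size_map t'_size.
have compl_u : compl n u = iota c e.+1.
  apply: (irr_sorted_eq ltn_trans ltnn (compl_sorted _ _) (iota_ltn_sorted _ _)) => y.
  rewrite u_w (mem_compl_take_stretch k_lt_n t_perm c_t).
  rewrite drop_rcons ?drop_oversize ?t'_size // mem_iota /= inE /stretch leqnn.
  by apply/idP/idP; lia.
rewrite /phi compl_u /= -map_stretch_rcons (red_mono _ (@leq_stretch c e)).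
exact: red_perm_iota t_perm.
Qed.

Lemma inD_stretch_decomposition u : inD k n u ->
  exists t' c, perm_eq (rcons t' c) (iota 1 k.+1) /\ u = map (stretch c e) t'.
Proof.
move=> [u_size [u_uniq [u_range [u_periodic _]]]].
have [a compl_u] : exists a, compl n u = iota a (n - k).
  have u_small : 2 * size u + 2 <= n by rewrite u_size.
  have := (periodic_complE u_uniq u_range u_small).1 u_periodic.
  move=> /interval_complE [a compl_u].
  by exists a; rewrite compl_u size_compl // u_size.
have a_range : 0 < a /\ a + e <= n.
  have := mem_compl n u a; have := mem_compl n u (a + e).
  by rewrite compl_u !mem_iota; lia.
have u_gap x : x \in u -> 0 < x <= n /\ ~~ (a <= x <= a + e).
  move=> xu; have := mem_compl n u x; rewrite compl_u mem_iota xu.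
  by have := allP u_range x xu; lia.
exists (map (squeeze a e) u), a; split; last first.
  rewrite -map_comp map_id_in // => x /u_gap x_gap /=.
  by apply: squeezeK; lia.
apply: perm_iota_range; rewrite ?size_rcons ?size_map ?u_size //.
  apply: (@map_uniq _ _ (stretch a e)).
  rewrite map_stretch_rcons -map_comp map_id_in => [|x /u_gap x_gap /=]; last first.
    by apply: squeezeK; lia.
  rewrite rcons_uniq u_uniq andbT; apply/negP => /u_gap; lia.
apply/allP=> x; rewrite mem_rcons inE => /predU1P[-> | /mapP[y /u_gap y_gap ->]]; first lia.
by rewrite /squeeze; case: (leqP y a); lia.
Qed.

End StretchedWords.

Section PhiBijection.

Variables n k : nat.
Hypotheses (k_pos : 0 < k) (k_small : 2 * k + 2 <= n).

Local Notation e := (n - k.+1).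

Lemma phi_inB u : inD k n u -> inB k.+1 (phi n u).
Proof.
move=> uD; have [t' [c [t_perm u_def]]] := inD_stretch_decomposition k_small uD.
rewrite u_def in uD *; rewrite phi_stretch //.
exists (rev (rcons t' c)); rewrite revK; split=> //.
by apply/inA_revE => //; apply/(inD_stretchE k_small t_perm).
Qed.

Lemma phi_inj u v : inD k n u -> inD k n v -> phi n u = phi n v -> u = v.
Proof.
move=> /(inD_stretch_decomposition k_small) [t' [c [t_perm ->]]].
move=> /(inD_stretch_decomposition k_small) [s' [d [s_perm ->]]].
by rewrite !phi_stretch // => /rcons_inj [-> ->].
Qed.

Lemma phi_surj b : inB k.+1 b -> exists u, inD k n u /\ phi n u = b.
Proof.
move=> [a [aA ->]]; have b_perm : perm_eq (rev a) (iota 1 k.+1).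
  by rewrite perm_rev; case: aA => _ [].
rewrite -(revK a) in aA; have := (@inA_revE k.+1 _ k_pos b_perm).1 aA.
case/lastP: (rev a) b_perm => [|t' c t_perm no_interval].
  by move/perm_size; rewrite size_iota.
exists (map (stretch c e) t'); rewrite phi_stretch //.
by split=> //; apply/(inD_stretchE k_small t_perm).
Qed.

End PhiBijection.

Theorem mainTheorem11 (n k : nat) :
  3 <= n -> 1 <= k -> k < n./2 ->
  (exists g : seq nat -> seq nat,
      (forall u, inD k n u -> inA k.+1 (g u)) /\
      (forall u v, inD k n u -> inD k n v -> g u = g v -> u = v) /\
      (forall s, inA k.+1 s -> exists u, inD k n u /\ g u = s)) /\
  ((forall u, inD k n u -> inB k.+1 (phi n u)) /\
   (forall u v, inD k n u -> inD k n v -> phi n u = phi n v -> u = v) /\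
   (forall b, inB k.+1 b -> exists u, inD k n u /\ phi n u = b)).
Proof.
move=> _ k_pos k_lt; have k_small : 2 * k + 2 <= n.
  by have := odd_double_half n; rewrite -muln2; lia.
split; last by split; [exact: phi_inB | split; [exact: phi_inj | exact: phi_surj]].
exists (fun u => rev (phi n u)); split=> [u /(phi_inB k_pos k_small) [a [aA ->]] | ].
  by rewrite revK.
split=> [u v uD vD /(congr1 rev) | s sA].
  by rewrite !revK => /(phi_inj k_small uD vD).
have [u [uD u_s]] := phi_surj k_pos k_small (ex_intro _ s (conj sA erefl)).
by exists u; rewrite u_s revK.
Qed.
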